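(* Consider the OTP chain based secure polar coding scheme (described in the context) over the delay-CSI wiretap channel model, in which the positions of $(\mathcal{L}_{X|Y})^c$ (which contain $\mathcal{B}_t$) are filled with publicly known frozen bits. Then the scheme achieves reliability: for every fixed number of blocks $T$, the probability that Bob incorrectly decodes some ciphertext bit $u_t^{\mathcal{I}_{t-1}}$ ($t=1,\dots,T$) or some key-stream bit $u_t^{\mathcal{I}_t}$ ($t=0,\dots,T-1$) is at most $2T\,O(2^{-N^\beta})$, and hence tends to $0$ as $N\to\infty$, for every realization of the wiretap states.
   Context: Notation: $N=2^n$, $\beta\in(0,1/2)$, $\delta_N=2^{-N^\beta}$, $\mathbf{G}_N=\mathbf{R}\mathbf{F}^{\otimes n}$ over $\mathrm{GF}(2)$ with $\mathbf{F}=\begin{bmatrix}1&0\\1&1\end{bmatrix}$ and $\mathbf{R}$ the bit-reversal permutation; $U^{\mathcal{A}}=(U^i)_{i\in\mathcal{A}}$. Model: main channel is a fixed, publicly known symmetric binary-input DMC $p_{Y|X}$; wiretap channel has a finite state set $\mathcal{S}$, each $s$ a symmetric binary-input DMC $p^{(s)}_{Z|X}$ (not necessarily degraded). Transmission is in $N$-length blocks $t=0,1,\dots,T$; in block $t$ the eavesdropper chooses the wiretap state $\mathbf{s}_t$, either constant over the block ($\mathbf{s}_t=s\in\mathcal{S}$, block-varying) or a sequence ($\mathbf{s}_t=s^{1:N}\in\mathcal{S}^N$, arbitrarily varying, the $i$-th use having law $p^{(s^i)}_{Z|X}$). Alice and Bob do not know $\mathbf{s}_t$ during block $t$ but learn it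 exactly after block $t$ ends. Bhattacharyya parameter $Z(X|Y)=2\sum_y p_Y(y)\sqrt{p_{X|Y}(0|y)p_{X|Y}(1|y)}$. With $U^N$ uniform and $X^N=U^N\mathbf{G}_N$: $\mathcal{L}_{X|Y}=\{i:Z(U^i|U^{1:i-1},Y^N)\le\delta_N\}$, $\mathcal{H}^{(\mathbf{s})}_{X|Z}=\{i:Z(U^i|U^{1:i-1},Z^N_{\mathbf{s}})\ge1-\delta_N\}$; $\mathcal{I}_t=\mathcal{L}_{X|Y}\cap\mathcal{H}^{(\mathbf{s}_t)}_{X|Z}$, $\mathcal{F}_t=(\mathcal{L}_{X|Y})^c\cap\mathcal{H}^{(\mathbf{s}_t)}_{X|Z}$, $\mathcal{R}_t=\mathcal{L}_{X|Y}\cap(\mathcal{H}^{(\mathbf{s}_t)}_{X|Z})^c$, $\mathcal{B}_t=(\mathcal{L}_{X|Y})^c\cap(\mathcal{H}^{(\mathbf{s}_t)}_{X|Z})^c$. OTP chain based scheme. Block 0: $u_0^{\mathcal{L}_{X|Y}}$ are uniform random bits, $u_0^{(\mathcal{L}_{X|Y})^c}$ are publicly known frozen bits; Alice sends $x_0^N=u_0^N\mathbf{G}_N$; Bob uses successive cancellation (SC) decoding: $\hat u_0^i=\arg\max_u p_{U^i|U^{1:i-1}Y^N}(u|\hat u_0^{1:i-1},y_0^N)$ for $i\in\mathcal{L}_{X|Y}$, and the frozen bit otherwise. After block $t$, both learn $\mathbf{s}_t$ and $\mathcal{I}_t$; Alice keeps $u_t^{\mathcal{I}_t}$ and Bob keeps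 $\hat u_t^{\mathcal{I}_t}$ as key stream. Block $t\ge1$: message $M_t$ with $|M_t|=|\mathcal{I}_{t-1}|$ is encrypted as $E_t=M_t\oplus u_{t-1}^{\mathcal{I}_{t-1}}$ and placed on $\mathcal{I}_{t-1}$; uniform random bits on $\mathcal{R}_{t-1}$; publicly known frozen bits on $(\mathcal{L}_{X|Y})^c$; Alice sends $x_t^N=u_t^N\mathbf{G}_N$; Bob SC-decodes as in block 0 and outputs $\widehat M_t=\hat u_t^{\mathcal{I}_{t-1}}\oplus\hat u_{t-1}^{\mathcal{I}_{t-1}}$. *)

From HB Require Import structures.
From mathcomp Require Import all_boot all_order all_algebra.
From mathcomp Require Import mxtens.
From mathcomp Require Import all_classical all_reals all_analysis.

Set Implicit Arguments.
Unset Strict Implicit.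
Unset Printing Implicit Defensive.

Import Order.TTheory GRing.Theory Num.Theory.
Local Open Scope ring_scope.

Definition Fker : 'M['F_2]_2 := \matrix_(i, j) (if (j <= i)%N then 1 else 0).

(* Kronecker power F^{(x)n} (tensmx is the Kronecker product of matrices) *)
Fixpoint kronpow (n : nat) : 'M['F_2]_(2 ^ n) :=
  match n return 'M['F_2]_(2 ^ n) with
  | 0 => 1%:M
  | n'.+1 => castmx (esym (expnS 2 n'), esym (expnS 2 n')) (tensmx Fker (kronpow n'))
  end.

Definition bitrev (n i : nat) : nat :=
  \sum_(k < n) (odd (i %/ 2 ^ k)) * 2 ^ (n.-1 - k).

Definition bitrev_mx (n : nat) : 'M['F_2]_(2 ^ n) :=
  \matrix_(i, j) (if (val j == bitrev n (val i)) then 1 else 0).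

Definition polarG (n : nat) : 'M['F_2]_(2 ^ n) := bitrev_mx n *m kronpow n.

Definition bdmc (R : realType) (Y : finType) (W : 'F_2 -> Y -> R) : Prop :=
  (forall x y, 0 <= W x y) /\ (forall x, \sum_(y : Y) W x y = 1).

Definition symmetric_bdmc (R : realType) (Y : finType) (W : 'F_2 -> Y -> R) : Prop :=
  bdmc W /\
  exists pi : Y -> Y, (forall y, pi (pi y) = y) /\ (forall y, W 1 y = W 0 (pi y)).

Definition bhatt (R : realType) (O : finType) (P : 'F_2 -> O -> R) : R :=
  let pO o := P 0 o + P 1 o in
  2 * \sum_(o : O) pO o * Num.sqrt ((P 0 o / pO o) * (P 1 o / pO o)).

Definition polar_joint (R : realType) (Y : finType) (n : nat)
  (Wj : 'I_(2 ^ n) -> 'F_2 -> Y -> R) (u : 'rV['F_2]_(2 ^ n))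
  (y : {ffun 'I_(2 ^ n) -> Y}) : R :=
  (2 ^+ (2 ^ n)%N)^-1 * \prod_(j < 2 ^ n) Wj j ((u *m polarG n) 0 j) (y j).

Definition widenN (n : nat) (i : 'I_(2 ^ n)) (k : 'I_i) : 'I_(2 ^ n) :=
  widen_ord (ltnW (ltn_ord i)) k.

(* joint pmf of (U^i, (U^{1:i-1}, Y^N)) (0-based: U_i and the prefix U_{<i}) *)
Definition prefix_joint (R : realType) (Y : finType) (n : nat)
  (Wj : 'I_(2 ^ n) -> 'F_2 -> Y -> R) (i : 'I_(2 ^ n))
  (b : 'F_2) (o : {ffun 'I_i -> 'F_2} * {ffun 'I_(2 ^ n) -> Y}) : R :=
  \sum_(u : 'rV['F_2]_(2 ^ n) |
         (u 0 i == b) && [forall k : 'I_i, u 0 (widenN k) == o.1 k])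
    polar_joint Wj u o.2.
Arguments prefix_joint {R Y n} Wj i b o.

Definition bhatt_polar (R : realType) (Y : finType) (n : nat)
  (Wj : 'I_(2 ^ n) -> 'F_2 -> Y -> R) (i : 'I_(2 ^ n)) : R :=
  bhatt (prefix_joint Wj i).

Definition deltaN (R : realType) (beta : R) (n : nat) : R :=
  2 `^ (- (((2 ^ n)%:R : R) `^ beta)).

Definition Lset (R : realType) (Y : finType) (W : 'F_2 -> Y -> R) (beta : R) (n : nat)
  : {set 'I_(2 ^ n)} :=
  [set i | bhatt_polar (fun _ => W) i <= deltaN beta n].

(* H^{(s)}_{X|Z} for a wiretap state sequence s = s^{1:N} (a block-constant state
   is the constant sequence) *)
Definition Hset (R : realType) (Z S : finType) (V : S -> 'F_2 -> Z -> R) (beta : R)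
  (n : nat) (s : {ffun 'I_(2 ^ n) -> S}) : {set 'I_(2 ^ n)} :=
  [set i | 1 - deltaN beta n <= bhatt_polar (fun j => V (s j)) i].

Definition set_coord (n : nat) (d : 'rV['F_2]_(2 ^ n)) (i : 'I_(2 ^ n)) (b : 'F_2) :=
  \row_j (if j == i then b else d 0 j).

Definition sc_posterior (R : realType) (Y : finType) (W : 'F_2 -> Y -> R) (n : nat)
  (i : 'I_(2 ^ n)) (d : 'rV['F_2]_(2 ^ n)) (y : {ffun 'I_(2 ^ n) -> Y}) (b : 'F_2) : R :=
  let P := prefix_joint (fun _ => W) i in
  let o := ([ffun k : 'I_i => d 0 (widenN k)], y) in
  P b o / (P 0 o + P 1 o).

(* decision on bit i given the already decoded bits d_{<i}: the arg max of the
   posterior (ties broken towards 0) if i in L, the frozen bit otherwise *)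
Definition sc_bit (R : realType) (Y : finType) (W : 'F_2 -> Y -> R) (n : nat)
  (L : {set 'I_(2 ^ n)}) (frozen : 'rV['F_2]_(2 ^ n)) (y : {ffun 'I_(2 ^ n) -> Y})
  (d : 'rV['F_2]_(2 ^ n)) (i : 'I_(2 ^ n)) : 'F_2 :=
  if i \in L then
    (if sc_posterior W i d y 0 < sc_posterior W i d y 1 then 1 else 0)
  else frozen 0 i.

Definition sc_decode (R : realType) (Y : finType) (W : 'F_2 -> Y -> R) (n : nat)
  (L : {set 'I_(2 ^ n)}) (frozen : 'rV['F_2]_(2 ^ n)) (y : {ffun 'I_(2 ^ n) -> Y})
  : 'rV['F_2]_(2 ^ n) :=
  foldl (fun d i => set_coord d i (sc_bit W L frozen y d i)) frozen (enum 'I_(2 ^ n)).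

Section Scheme.
Variables (R : realType) (Y Z S : finType).
Variables (W : 'F_2 -> Y -> R) (V : S -> 'F_2 -> Z -> R) (beta : R).
Variables (n T : nat).
Variable s : nat -> {ffun 'I_(2 ^ n) -> S}.
(* publicly known frozen bits of every block (only positions in L^c are used) *)
Variable f : nat -> 'rV['F_2]_(2 ^ n).
(* messages: M_t occupies the positions I_{t-1} (other coordinates unused) *)
Variable m : nat -> 'rV['F_2]_(2 ^ n).

Definition Lc := Lset W beta n.
Definition Iset (t : nat) : {set 'I_(2 ^ n)} := Lc :&: Hset V beta (s t).

(* an outcome: for each block t = 0..T, the uniform random bits r_t and Bob's
   channel output y_t *)
Definition outcome := {ffun 'I_T.+1 -> 'rV['F_2]_(2 ^ n) * {ffun 'I_(2 ^ n) -> Y}}.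

Definition rnd (w : outcome) (t : nat) : 'rV['F_2]_(2 ^ n) := (w (inord t)).1.
Definition out (w : outcome) (t : nat) : {ffun 'I_(2 ^ n) -> Y} := (w (inord t)).2.

Fixpoint uvec (w : outcome) (t : nat) : 'rV['F_2]_(2 ^ n) :=
  match t with
  | 0 => \row_i (if i \in Lc then rnd w 0 0 i else f 0 0 i)
  | t'.+1 => \row_i (if i \in Iset t' then m t'.+1 0 i + uvec w t' 0 i
                     else if i \in Lc then rnd w t'.+1 0 i
                     else f t'.+1 0 i)
  end.

Definition uhat (w : outcome) (t : nat) : 'rV['F_2]_(2 ^ n) :=
  sc_decode W Lc (f t) (out w t).

Definition outcome_prob (w : outcome) : R :=
  \prod_(t < T.+1)
    ((2 ^+ (2 ^ n)%N)^-1 *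
     \prod_(j < 2 ^ n) W ((uvec w t *m polarG n) 0 j) (out w t j)).

Definition error_event (w : outcome) : bool :=
  [exists t : 'I_T.+1, (0 < t)%N &&
     [exists i in Iset t.-1, uhat w t 0 i != uvec w t 0 i]]
  || [exists t : 'I_T.+1, (t < T)%N &&
     [exists i in Iset t, uhat w t 0 i != uvec w t 0 i]].

Definition error_prob : R :=
  \sum_(w : outcome | error_event w) outcome_prob w.

End Scheme.

From mathcomp Require Import all_boot all_order all_algebra.
From mathcomp Require Import all_classical all_reals all_analysis.
From mathcomp Require Import ring lra.

Set Implicit Arguments.
Unset Strict Implicit.
Unset Printing Implicit Defensive.

Import Order.TTheory GRing.Theory Num.Theory.
Local Open Scope classical_set_scope.
Local Open Scope ring_scope.

(* Bob's SC decoder can only fail in block [t] if some bit [i] of L_{X|Y} would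
   be decoded wrongly from the true prefix u_t^{1:i-1} (a genie-aided
   decision), so a union bound over the at most 2T relevant blocks and the N
   positions leaves one such decision to bound by Z(U^i | U^{1:i-1}, Y^N),
   which is at most delta_N. A wrong decision forces P(u_i, o) <= P(u_i + 1, o),
   so its probability is at most the average of sqrt(P(u_i + 1, o) / P(u_i, o)),
   and that average is Z. Two facts make it the right average. Whatever the
   messages, the bits of u_t on L_{X|Y} are uniform (on I_{t-1} they are
   one-time padded with bits that were uniform in block t - 1) while the frozen
   bits are fixed; and over a symmetric channel the conditional bound given u_t
   does not depend on u_t, because the input shift u |-> u + v is undone by the
   output involution on the positions where v G_N is 1. Finally
   N delta_N <= C / N, which gives the limit. *)

Lemma F2_cases (x : 'F_2) : x = 0 \/ x = 1.
Proof. by case: x => [[|[|k]] //= lt_k2]; [left | right]; apply: val_inj. Qed.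

Lemma F2_addxx (x : 'F_2) : x + x = 0.
Proof. by case: (F2_cases x) => ->; [rewrite addr0 | apply/eqP]. Qed.

Lemma big_F2 (M : nmodType) (F : 'F_2 -> M) : \sum_(b : 'F_2) F b = F 0 + F 1.
Proof.
rewrite (bigD1 0) //= (bigD1 1) //= big1 ?addr0 // => x /andP[x_neq1 x_neq0].
by case: (F2_cases x) x_neq1 x_neq0 => ->; rewrite eqxx.
Qed.

Lemma mul_sqrt_ratio (R : rcfType) (a b : R) : 0 <= a ->
  Num.sqrt b / Num.sqrt a * a = Num.sqrt a * Num.sqrt b.
Proof.
move=> a_ge0; have [->|a_neq0] := eqVneq a 0; first by rewrite sqrtr0 !mulr0 mul0r.
have sa_neq0 : Num.sqrt a != 0 by rewrite sqrtr_eq0 -ltNge lt_def a_neq0 a_ge0.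
by rewrite -{2}(sqr_sqrtr a_ge0) expr2; field.
Qed.

Lemma mul_sqrt_normalized (R : rcfType) (a b : R) : 0 <= a -> 0 <= b ->
  (a + b) * Num.sqrt (a / (a + b) * (b / (a + b))) = Num.sqrt a * Num.sqrt b.
Proof.
move=> a_ge0 b_ge0; have [ab0|ab_neq0] := eqVneq (a + b) 0.
  have a0 : a = 0 by apply/eqP; rewrite eq_le a_ge0 andbT -ab0 lerDl.
  by rewrite ab0 a0 sqrtr0 !mul0r.
rewrite mulrACA -expr2 sqrtrM ?mulr_ge0 // sqrtr_sqr ger0_norm ?invr_ge0 ?addr_ge0 //.
by rewrite mulrCA mulfV // mulr1 sqrtrM.
Qed.

Lemma sqrt_ratio_ge1 (R : rcfType) (a b : R) : 0 < a -> a <= b ->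
  1 <= Num.sqrt b / Num.sqrt a.
Proof.
move=> a_gt0 le_ab; have sa_gt0 : 0 < Num.sqrt a by rewrite sqrtr_gt0.
by rewrite ler_pdivlMr // mul1r ler_sqrt // (le_trans (ltW a_gt0) le_ab).
Qed.

Lemma sum_ffun_prod_coord (R : comNzRingType) (I A : finType) (t : I)
    (a : I -> A -> R) (g : A -> R) :
  \sum_(X : {ffun I -> A}) (\prod_k a k (X k)) * g (X t) =
  (\prod_(k | k != t) \sum_x a k x) * \sum_x a t x * g x.
Proof.
transitivity (\sum_(X : {ffun I -> A})
    \prod_k (a k (X k) * (if k == t then g (X k) else 1))).
  apply: eq_bigr => X _; rewrite big_split /=; congr (_ * _).
  by rewrite (bigD1 t) //= eqxx big1 ?mulr1 // => k /negbTE ->.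
rewrite -(bigA_distr_bigA (fun k x => a k x * (if k == t then g x else 1))) /=.
rewrite (bigD1 t) //= mulrC; congr (_ * _).
  by apply: eq_bigr => k /negbTE kt; apply: eq_bigr => x _; rewrite kt mulr1.
by apply: eq_bigr => x _; rewrite eqxx.
Qed.

Lemma sum1_rowF2 (R : nzSemiRingType) (N : nat) :
  \sum_(x : 'rV['F_2]_N) (1 : R) = 2 ^+ N.
Proof. by rewrite sumr_const card_mx card_Fp // mul1n natrX. Qed.

Lemma sum_pair (M : nmodType) (A B : finType) (F : A * B -> M) :
  \sum_(p : A * B) F p = \sum_(a : A) \sum_(b : B) F (a, b).
Proof. by rewrite pair_bigA; apply: eq_bigr => -[]. Qed.

Section PolarChannel.
Variables (R : realType) (Y : finType) (W : 'F_2 -> Y -> R) (n : nat).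

Local Notation N := (2 ^ n)%N.
Local Notation row := 'rV['F_2]_N.
Local Notation outputs := {ffun 'I_N -> Y}.
Local Notation P i := (prefix_joint (fun _ : 'I_N => W) i).

Definition polar_lik (u : row) (y : outputs) : R :=
  \prod_(j < N) W ((u *m polarG n) 0 j) (y j).

Definition prefix_obs (i : 'I_N) (u : row) (y : outputs) :=
  ([ffun k : 'I_i => u 0 (widenN k)], y).

Definition bhatt_ratio (i : 'I_N) (b : 'F_2) (o : {ffun 'I_i -> 'F_2} * outputs) :=
  Num.sqrt (P i (b + 1) o) / Num.sqrt (P i b o).
Arguments bhatt_ratio : clear implicits.

Definition bhatt_given (i : 'I_N) (u : row) : R :=
  \sum_(y : outputs) polar_lik u y * bhatt_ratio i (u 0 i) (prefix_obs i u y).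

Hypothesis W_ge0 : forall x y, 0 <= W x y.

Lemma polar_lik_ge0 u y : 0 <= polar_lik u y.
Proof. by apply: prodr_ge0 => j _. Qed.

Lemma sum_polar_lik (W_sum1 : forall x, \sum_y W x y = 1) u :
  \sum_(y : outputs) polar_lik u y = 1.
Proof.
rewrite -(bigA_distr_bigA (fun j y => W ((u *m polarG n) 0 j) y)) /=.
by rewrite big1 // => j _; rewrite W_sum1.
Qed.

Lemma prefix_joint_ge0 i b o : 0 <= P i b o.
Proof.
apply: sumr_ge0 => u _; rewrite mulr_ge0 ?invr_ge0 ?exprn_ge0 //.
exact: polar_lik_ge0.
Qed.

Lemma sum_polar_lik_prefix (i : 'I_N) b (o1 : {ffun 'I_i -> 'F_2}) y (c : R) :
  \sum_(u : row | (u 0 i, (prefix_obs i u y).1) == (b, o1)) polar_lik u y * c =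
  2 ^+ N * (P i b (o1, y) * c).
Proof.
rewrite mulrA -big_distrl /prefix_joint /polar_joint -big_distrr /=.
rewrite mulrA mulfV ?mul1r //; congr (_ * _); apply: eq_bigl => u.
rewrite xpair_eqE; congr andb; apply/eqP/forallP => [<- k | eq_o1].
  by rewrite ffunE.
by apply/ffunP => k; rewrite ffunE; apply/eqP.
Qed.

Lemma polar_lik_le_prefix_joint i u y :
  (2 ^+ N)^-1 * polar_lik u y <= P i (u 0 i) (prefix_obs i u y).
Proof.
rewrite /prefix_joint (bigD1 u) /=; last first.
  by rewrite eqxx; apply/forallP => k; rewrite ffunE.
rewrite lerDl; apply: sumr_ge0 => v _.
by rewrite mulr_ge0 ?invr_ge0 ?exprn_ge0 ?polar_lik_ge0.
Qed.

Lemma bhatt_ratio_ge0 i b o : 0 <= bhatt_ratio i b o.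
Proof. by rewrite divr_ge0 ?sqrtr_ge0. Qed.

Lemma prefix_joint_bhatt_ratio i o :
  P i 0 o * bhatt_ratio i 0 o + P i 1 o * bhatt_ratio i 1 o =
  2 * ((P i 0 o + P i 1 o) *
       Num.sqrt (P i 0 o / (P i 0 o + P i 1 o) * (P i 1 o / (P i 0 o + P i 1 o)))).
Proof.
rewrite mul_sqrt_normalized ?prefix_joint_ge0 // /bhatt_ratio add0r.
have -> : (1 + 1 : 'F_2) = 0 by apply/eqP.
by rewrite ![P i _ o * _]mulrC !mul_sqrt_ratio ?prefix_joint_ge0 //; ring.
Qed.

Lemma sum_bhatt_given i :
  \sum_(u : row) bhatt_given i u = 2 ^+ N * bhatt_polar (fun _ : 'I_N => W) i.
Proof.
rewrite /bhatt_polar /bhatt !mulr_sumr sum_pair [RHS]exchange_big /=.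
rewrite /bhatt_given [LHS]exchange_big /=; apply: eq_bigr => y _.
rewrite (partition_big (fun u : row => (u 0 i, (prefix_obs i u y).1)) xpredT) //=.
rewrite sum_pair exchange_big /=; apply: eq_bigr => o1 _.
rewrite -prefix_joint_bhatt_ratio big_F2 mulrDr -!sum_polar_lik_prefix.
by congr (_ + _); apply: eq_bigr => u /eqP[<- <-].
Qed.

Lemma sc_bit_wrong (L : {set 'I_N}) f i u y : i \in L ->
  sc_bit W L f y u i != u 0 i ->
  P i (u 0 i) (prefix_obs i u y) <= P i (u 0 i + 1) (prefix_obs i u y).
Proof.
rewrite /sc_bit /sc_posterior => ->; rewrite -/(prefix_obs i u y).
set a := P i 0 _; set b := P i 1 _.
have a_ge0 : 0 <= a by exact: prefix_joint_ge0.
have b_ge0 : 0 <= b by exact: prefix_joint_ge0.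
have [ab0|ab_gt0] := eqVneq (a + b) 0.
  have [a0 b0] : a = 0 /\ b = 0 by split; lra.
  by case: (F2_cases (u 0 i)) => ->; rewrite ?add0r ?F2_addxx -/a -/b a0 b0.
have {}ab_gt0 : 0 < a + b by rewrite lt_def ab_gt0 addr_ge0.
rewrite ltr_pM2r ?invr_gt0 //.
case: (F2_cases (u 0 i)) => ->; rewrite ?add0r ?F2_addxx -/a -/b.
  by case: ltP => // /ltW.
by case: ltP.
Qed.

Lemma genie_err_le_ratio (L : {set 'I_N}) f i u y : i \in L ->
  polar_lik u y * (sc_bit W L f y u i != u 0 i)%:R <=
  polar_lik u y * bhatt_ratio i (u 0 i) (prefix_obs i u y).
Proof.
move=> iL; have [->|lik_neq0] := eqVneq (polar_lik u y) 0; first by rewrite !mul0r.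
have lik_gt0 : 0 < polar_lik u y by rewrite lt_def lik_neq0 polar_lik_ge0.
rewrite ler_pM2l //; case: eqP => [_|/eqP wrong]; first exact: bhatt_ratio_ge0.
apply: sqrt_ratio_ge1; last exact: sc_bit_wrong iL wrong.
apply: lt_le_trans (polar_lik_le_prefix_joint i u y).
by rewrite mulr_gt0 ?invr_gt0 ?exprn_gt0.
Qed.

Lemma sc_bit_prefix (L : {set 'I_N}) f y (d d' : row) (i : 'I_N) :
  (forall j : 'I_N, (j < i)%N -> d 0 j = d' 0 j) ->
  sc_bit W L f y d i = sc_bit W L f y d' i.
Proof.
move=> eq_dd'; rewrite /sc_bit /sc_posterior.
suff -> : [ffun k : 'I_i => d 0 (widenN k)] = [ffun k : 'I_i => d' 0 (widenN k)] by [].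
by apply/ffunP => k; rewrite !ffunE eq_dd' //; exact: (ltn_ord k).
Qed.

Lemma sc_decode_eq (L : {set 'I_N}) f y u :
  (forall i, i \in L -> sc_bit W L f y u i = u 0 i) ->
  (forall i, i \notin L -> f 0 i = u 0 i) ->
  sc_decode W L f y = u.
Proof.
move=> okL okF; pose step d i := set_coord d i (sc_bit W L f y d i).
have prefix_ok k : (k <= N)%N -> forall j : 'I_N, (j < k)%N ->
    foldl step f (take k (enum 'I_N)) 0 j = u 0 j.
  elim: k => [//|k IH] lt_kN j; rewrite ltnS => le_jk.
  rewrite (take_nth j) ?size_enum_ord // foldl_rcons {1}/step /set_coord mxE.
  set i := nth j _ k; have val_i : (i : nat) = k by rewrite /i nth_enum_ord.
  case: eqP => [->|/eqP neq_ji]; last first.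
    by apply: (IH (ltnW lt_kN)); rewrite ltn_neqAle le_jk -val_i andbT.
  rewrite (@sc_bit_prefix _ _ _ _ u) => [|j' lt_j'i]; last first.
    by apply: (IH (ltnW lt_kN)); rewrite -val_i.
  by case: (boolP (i \in L)) => [/okL //|iL]; rewrite /sc_bit (negbTE iL) okF.
apply/matrixP => a j; rewrite [a]ord1 /sc_decode -(take_size (enum 'I_N)).
by rewrite size_enum_ord; apply: prefix_ok.
Qed.

Variable pi : Y -> Y.
Hypothesis piK : involutive pi.
Hypothesis W1_pi : forall y, W 1 y = W 0 (pi y).

Lemma W_flip (x : 'F_2) y : W (x + 1) (pi y) = W x y.
Proof.
case: (F2_cases x) => ->; first by rewrite add0r W1_pi piK.
by rewrite F2_addxx W1_pi.
Qed.

Definition flip_out (v : row) (y : outputs) : outputs :=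
  [ffun j => if (v *m polarG n) 0 j == 1 then pi (y j) else y j].

Lemma flip_outK v : involutive (flip_out v).
Proof.
by move=> y; apply/ffunP => j; rewrite !ffunE; case: ifP => vj; rewrite vj ?piK.
Qed.

Lemma polar_lik_flip u v y : polar_lik (u + v) (flip_out v y) = polar_lik u y.
Proof.
apply: eq_bigr => j _; rewrite mulmxDl mxE ffunE.
by case: (F2_cases ((v *m polarG n) 0 j)) => ->; rewrite ?addr0 //= W_flip.
Qed.

Lemma prefix_joint_flip (i : 'I_N) b (o1 : {ffun 'I_i -> 'F_2}) y (v : row) :
  P i (b + v 0 i) ([ffun k => o1 k + v 0 (widenN k)], flip_out v y) = P i b (o1, y).
Proof.
rewrite /prefix_joint (reindex_inj (addIr v)) /=; apply: eq_big => u.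
  rewrite mxE (inj_eq (addIr _)); congr andb; apply: eq_forallb => k.
  by rewrite ffunE mxE (inj_eq (addIr _)).
by move=> _; rewrite /polar_joint -/(polar_lik _ _) -/(polar_lik _ _) polar_lik_flip.
Qed.

Lemma bhatt_given_shift i u v : bhatt_given i (u + v) = bhatt_given i u.
Proof.
rewrite /bhatt_given (reindex_inj (can_inj (flip_outK v))) /=.
apply: eq_bigr => y _; rewrite polar_lik_flip /bhatt_ratio mxE addrAC.
have -> : prefix_obs i (u + v) (flip_out v y) =
    ([ffun k => (prefix_obs i u y).1 k + v 0 (widenN k)], flip_out v y).
  by congr pair; apply/ffunP => k; rewrite !ffunE mxE.
by rewrite !prefix_joint_flip.
Qed.

(* By symmetry the conditional parameter does not depend on [u], so it equals
   its average, which is the Bhattacharyya parameter itself. *)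
Lemma bhatt_givenE i u : bhatt_given i u = bhatt_polar (fun _ : 'I_N => W) i.
Proof.
apply: (@mulfI _ (2 ^+ N)); first by rewrite expf_neq0 ?pnatr_eq0.
rewrite -sum_bhatt_given -(sum1_rowF2 R) mulr_suml; apply: eq_bigr => v _.
by rewrite mul1r -(bhatt_given_shift i v (u - v)) addrC subrK.
Qed.

Lemma genie_err_le_bhatt (L : {set 'I_N}) f i u : i \in L ->
  \sum_(y : outputs) polar_lik u y * (sc_bit W L f y u i != u 0 i)%:R <=
  bhatt_polar (fun _ : 'I_N => W) i.
Proof.
move=> iL; rewrite -(bhatt_givenE i u); apply: ler_sum => y _.
exact: genie_err_le_ratio.
Qed.

End PolarChannel.

Section OTPChain.
Variables (R : realType) (Y Z S : finType).
Variables (W : 'F_2 -> Y -> R) (V : S -> 'F_2 -> Z -> R) (beta : R) (n T : nat).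
Variables (s : nat -> {ffun 'I_(2 ^ n) -> S}) (f m : nat -> 'rV['F_2]_(2 ^ n)).

Local Notation N := (2 ^ n)%N.
Local Notation row := 'rV['F_2]_N.
Local Notation outputs := {ffun 'I_N -> Y}.
Local Notation L := (Lc W beta n).
Local Notation K t := (Iset W V beta s t).
Local Notation uA := (uvec W V beta s f m).
Local Notation prob := (outcome_prob W V beta s f m).
Local Notation rnds := {ffun 'I_T.+1 -> row}.
Local Notation outs := {ffun 'I_T.+1 -> outputs}.

Lemma Iset_subL t i : i \in K t -> i \in L.
Proof. by rewrite inE => /andP[]. Qed.

Lemma uvec_frozen (w : outcome Y n T) t i : i \notin L -> uA w t 0 i = f t 0 i.
Proof.
move=> iNL; case: t => [|t] /=; rewrite mxE (negbTE iNL) //.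
by case: ifP => // /Iset_subL iL; rewrite iL in iNL.
Qed.

Definition join_outcome (r : rnds) (y : outs) : outcome Y n T :=
  [ffun k => (r k, y k)].

Lemma sum_outcome (F : outcome Y n T -> R) :
  \sum_(w : outcome Y n T) F w = \sum_(r : rnds) \sum_(y : outs) F (join_outcome r y).
Proof.
transitivity (\sum_(p : rnds * outs) F (join_outcome p.1 p.2)).
  rewrite (reindex (fun p => join_outcome p.1 p.2)) //=.
  exists (fun w : outcome Y n T => ([ffun k => (w k).1], [ffun k => (w k).2])).
    by move=> [r y] _; congr pair; apply/ffunP => k; rewrite !ffunE.
  by move=> w _; apply/ffunP => k; rewrite !ffunE -surjective_pairing.
by rewrite sum_pair.
Qed.

Definition with_frozen t (x : row) : row :=
  \row_i (if i \in L then x 0 i else f t 0 i).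

Definition chain_step t (u x : row) : row :=
  \row_i (if i \in K t then m t.+1 0 i + u 0 i
          else if i \in L then x 0 i else f t.+1 0 i).

Fixpoint uvec_rnd (r : rnds) t : row :=
  if t is t'.+1 then chain_step t' (uvec_rnd r t') (r (inord t))
  else with_frozen 0 (r (inord 0)).

Lemma uvec_join r y t : uA (join_outcome r y) t = uvec_rnd r t.
Proof. by elim: t => [|t IH] /=; apply/matrixP => a i; rewrite !mxE /rnd ffunE ?IH. Qed.

Lemma out_join r y t : out (join_outcome r y) t = y (inord t).
Proof. by rewrite /out ffunE. Qed.

(* On the key positions [K t], exchanging the random bits of blocks [t] and
   [t + 1] (shifted by the message) turns the one-time-padded bits of block
   [t + 1] into fresh random bits: this is the change of variables behind
   [sum_uvec_rnd]. *)
Definition swap_mix t (a b : row) : row :=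
  \row_i (if i \in K t then b 0 i + m t.+1 0 i else a 0 i).

Definition swap_rnd t (r : rnds) : rnds :=
  [ffun k => if k == inord t then swap_mix t (r (inord t)) (r (inord t.+1))
             else if k == inord t.+1 then swap_mix t (r (inord t.+1)) (r (inord t))
             else r k].

Lemma swap_mixK t a b : swap_mix t (swap_mix t a b) (swap_mix t b a) = a.
Proof.
apply/matrixP => c i; rewrite [c]ord1 !mxE.
by case: ifP => iK; rewrite iK // -addrA F2_addxx addr0.
Qed.

Lemma chain_step_swap t a b :
  chain_step t (with_frozen t (swap_mix t a b)) (swap_mix t b a) = with_frozen t.+1 b.
Proof.
apply/matrixP => c i; rewrite [c]ord1 !mxE; case: (boolP (i \in K t)) => [iK|_].
  by rewrite (Iset_subL iK) addrCA F2_addxx addr0.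
by case: (i \in L).
Qed.

Lemma inord_succ_neq t : (t < T)%N -> (inord t.+1 : 'I_T.+1) != inord t.
Proof.
move=> ltT; apply/eqP => /(congr1 val) /=.
by rewrite inordK // inordK ?ltnS ?(ltnW ltT) // => /esym /n_Sn.
Qed.

Lemma swap_rndK t : (t < T)%N -> involutive (swap_rnd t).
Proof.
move=> ltT r; have neq := negbTE (inord_succ_neq ltT).
apply/ffunP => k; rewrite !ffunE !eqxx neq !swap_mixK.
by case: eqP => [->|_] //; case: eqP => [->|].
Qed.

Lemma sum_uvec_rnd t : (t <= T)%N -> forall H : rnds -> row -> R,
  (forall r r' : rnds,
     (forall k : 'I_T.+1, (t < k)%N -> r k = r' k) -> H r =1 H r') ->
  \sum_(r : rnds) H r (uvec_rnd r t) =
  \sum_(r : rnds) H r (with_frozen t (r (inord t))).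
Proof.
elim: t => [//|t IH] ltT H H_future.
have val_t : (inord t : 'I_T.+1) = t :> nat by rewrite inordK // ltnW.
have val_t1 : (inord t.+1 : 'I_T.+1) = t.+1 :> nat by rewrite inordK.
rewrite /= (IH (ltnW ltT) (fun r u => H r (chain_step t u (r (inord t.+1))))); last first.
  move=> r r' eq_rr' u; rewrite (eq_rr' (inord t.+1)) ?val_t1 //.
  by apply: H_future => k lt_tk; rewrite eq_rr' // ltnW.
rewrite (reindex_inj (can_inj (swap_rndK ltT))) /=; apply: eq_bigr => r _.
rewrite (H_future _ r) => [|k lt_tk]; last first.
  rewrite ffunE; case: eqP => [k_t|_].
    by move: lt_tk; rewrite k_t val_t ltnNge leqnSn.
  by case: eqP => [k_t1|_] //; move: lt_tk; rewrite k_t1 val_t1 ltnn.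
by rewrite !ffunE eqxx (negbTE (inord_succ_neq ltT)) eqxx chain_step_swap.
Qed.

Lemma prob_join r y :
  prob (join_outcome r y) =
  \prod_(k < T.+1) ((2 ^+ N)^-1 * polar_lik W (uvec_rnd r k) (y k)).
Proof. by apply: eq_bigr => k _; rewrite uvec_join out_join inord_val. Qed.

Hypothesis W_sum1 : forall x, \sum_y W x y = 1.

(* Whatever the messages, block [t] is distributed as a single polar block
   with uniform information bits and the frozen bits [f t]. *)
Lemma expect_block (t : 'I_T.+1) (g : row -> outputs -> R) :
  \sum_(w : outcome Y n T) prob w * g (uA w t) (out w t) =
  (2 ^+ N)^-1 * \sum_(x : row) \sum_(y : outputs)
                  polar_lik W (with_frozen t x) y * g (with_frozen t x) y.
Proof.
set c : R := (2 ^+ N)^-1; pose G u := \sum_(y : outputs) polar_lik W u y * g u y.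
have sum_outs r : \sum_(y : outs) prob (join_outcome r y) *
      g (uA (join_outcome r y) t) (out (join_outcome r y) t) =
    (\prod_(k | k != t) c) * (c * G (uvec_rnd r t)).
  pose a (k : 'I_T.+1) x := c * polar_lik W (uvec_rnd r k) x.
  transitivity (\sum_(y : outs) (\prod_k a k (y k)) * g (uvec_rnd r t) (y t)).
    by apply: eq_bigr => y _; rewrite prob_join uvec_join out_join inord_val.
  rewrite (sum_ffun_prod_coord t a); congr (_ * _).
    by apply: eq_bigr => k _; rewrite -mulr_sumr sum_polar_lik // mulr1.
  by rewrite /G mulr_sumr; apply: eq_bigr => y _; rewrite mulrA.
have sum_rnds (h : row -> R) :
    \sum_(r : rnds) h (r t) = (\prod_(k | k != t) 2 ^+ N) * \sum_(x : row) h x.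
  transitivity (\sum_(r : rnds) (\prod_(k < T.+1) (1 : R)) * h (r t)).
    by apply: eq_bigr => r _; rewrite big1 ?mul1r.
  rewrite (sum_ffun_prod_coord t (fun _ _ => 1 : R) h).
  congr (_ * _); last by apply: eq_bigr => x _; rewrite mul1r.
  by apply: eq_bigr => k _; rewrite sum1_rowF2.
rewrite sum_outcome; under eq_bigr do rewrite sum_outs.
rewrite -mulr_sumr -mulr_sumr (@sum_uvec_rnd t (ltn_ord t) (fun _ u => G u)) //.
rewrite inord_val (sum_rnds (fun x => G (with_frozen t x))) mulrCA.
rewrite [X in c * X]mulrA -big_split /= big1 ?mul1r // => k _.
by rewrite mulVf // expf_neq0 ?pnatr_eq0.
Qed.

Hypothesis W_ge0 : forall x y, 0 <= W x y.
Variable pi : Y -> Y.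
Hypothesis piK : involutive pi.
Hypothesis W1_pi : forall y, W 1 y = W 0 (pi y).

Lemma outcome_prob_ge0 (w : outcome Y n T) : 0 <= prob w.
Proof.
apply: prodr_ge0 => k _; rewrite mulr_ge0 ?invr_ge0 ?exprn_ge0 //.
exact: polar_lik_ge0.
Qed.

Definition genie_errors t (w : outcome Y n T) : R :=
  \sum_(i in L) (sc_bit W L (f t) (out w t) (uA w t) i != uA w t 0 i)%:R.

Lemma error_event_genie_errors (w : outcome Y n T) : error_event W V beta s f m w ->
  exists2 t : 'I_T.+1, (0 < t)%N || (t < T)%N & 1 <= genie_errors t w.
Proof.
have block_err (t : 'I_T.+1) : uhat W beta f w t != uA w t -> 1 <= genie_errors t w.
  move=> neq; have [i iL wrong] : exists2 i, i \in L &
      sc_bit W L (f t) (out w t) (uA w t) i != uA w t 0 i.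
    apply/exists_inP; apply: contraR neq => /exists_inPn ok; apply/eqP.
    by apply: sc_decode_eq => [i /ok/negPn/eqP | i /uvec_frozen ->].
  by rewrite /genie_errors (bigD1 i) //= wrong lerDl sumr_ge0.
by case/orP => /existsP[t /andP[Qt /existsP[i /andP[_ neq]]]]; exists t;
  rewrite ?Qt ?orbT //; apply: block_err; apply: contra neq => /eqP ->.
Qed.

Lemma expect_genie_errors (t : 'I_T.+1) :
  \sum_(w : outcome Y n T) prob w * genie_errors t w <= N%:R * deltaN beta n.
Proof.
under eq_bigr do rewrite /genie_errors mulr_sumr.
rewrite exchange_big /=; apply: (@le_trans _ _ (\sum_(i in L) deltaN beta n)); last first.
  rewrite sumr_const -[_ *+ _]mulr_natl; apply: ler_wpM2r; first exact: powR_ge0.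
  by rewrite ler_nat; apply: leq_trans (max_card _) _; rewrite card_ord.
apply: ler_sum => i iL.
rewrite (expect_block t (fun u y => (sc_bit W L (f t) y u i != u 0 i)%:R)).
apply: (@le_trans _ _ ((2 ^+ N)^-1 * \sum_(x : row) bhatt_polar (fun _ : 'I_N => W) i)).
  rewrite ler_wpM2l ?invr_ge0 ?exprn_ge0 //; apply: ler_sum => x _.
  by apply: (genie_err_le_bhatt W_ge0 piK W1_pi).
rewrite sumr_const card_mx card_Fp // mul1n -[bhatt_polar _ _ *+ _]mulr_natl.
rewrite natrX mulrA mulVf ?mul1r //.
by move: iL; rewrite inE.
Qed.

End OTPChain.

Lemma union_bound (R : realDomainType) (A B : finType) (P : pred A) (Q : pred B)
    (p : A -> R) (e : B -> A -> R) :
  (forall a, 0 <= p a) -> (forall b a, 0 <= e b a) ->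
  (forall a, P a -> exists2 b, Q b & 1 <= e b a) ->
  \sum_(a | P a) p a <= \sum_(b | Q b) \sum_a p a * e b a.
Proof.
move=> p_ge0 e_ge0 cover; rewrite exchange_big /=.
apply: (@le_trans _ _ (\sum_(a | P a) \sum_(b | Q b) p a * e b a)); last first.
  rewrite [X in _ <= X](bigID P) /= lerDl.
  by apply: sumr_ge0 => a _; apply: sumr_ge0 => b _; apply: mulr_ge0.
apply: ler_sum => a /cover[b Qb e_ge1]; rewrite -mulr_sumr ler_peMr //.
rewrite (bigD1 b) //= (le_trans e_ge1) // lerDl.
by apply: sumr_ge0 => b' _.
Qed.

Lemma card_blocks_le (T : nat) :
  (#|[pred t : 'I_T.+1 | (0 < t)%N || (t < T)%N]| <= 2 * T)%N.
Proof.
case: T => [|T]; first by rewrite eq_card0 // => t; rewrite ord1.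
by apply: leq_trans (max_card _) _; rewrite card_ord mul2n -addnn addSn ltnS leq_addl.
Qed.

Lemma error_prob_le (R : realType) (Y Z S : finType) (W : 'F_2 -> Y -> R)
    (V : S -> 'F_2 -> Z -> R) (beta : R) (T n : nat)
    (s : nat -> {ffun 'I_(2 ^ n) -> S}) (f m : nat -> 'rV['F_2]_(2 ^ n)) :
  symmetric_bdmc W ->
  error_prob W V beta T s f m <= (2 * T)%:R * ((2 ^ n)%:R * deltaN beta n).
Proof.
case=> -[W_ge0 W_sum1] [pi [piK W1_pi]].
pose Q := [pred t : 'I_T.+1 | (0 < t)%N || (t < T)%N].
apply: (@le_trans _ _ (\sum_(t in Q) \sum_(w : outcome Y n T)
    outcome_prob W V beta s f m w * genie_errors W V beta s f m t w)).
  apply: union_bound => [w | t w | w /error_event_genie_errors //].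
    exact: outcome_prob_ge0.
  by apply: sumr_ge0 => i _.
apply: (@le_trans _ _ (\sum_(t in Q) (2 ^ n)%:R * deltaN beta n)).
  by apply: ler_sum => t _; apply: expect_genie_errors piK W1_pi t.
rewrite sumr_const [X in _ <= X]mulr_natl; apply: ler_wpMn2l (card_blocks_le T).
by rewrite mulr_ge0 ?powR_ge0.
Qed.

Lemma pow_le_powR2 (R : realType) (M : R) (K : nat) : (0 < K)%N -> 0 <= M ->
  (ln 2 / K%:R * M) ^+ K <= 2 `^ M.
Proof.
move=> K_gt0 M_ge0; have ln2_gt0 : 0 < ln (2 : R) by rewrite ln_gt0 // ltr1n.
have -> : 2 `^ M = (2 `^ (M / K%:R)) ^+ K.
  by rewrite -powR_mulrn ?powR_ge0 // -powRrM mulfVK // pnatr_eq0 -lt0n.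
apply: lerXn2r; first by rewrite nnegrE mulr_ge0 // divr_ge0 // ltW.
  by rewrite nnegrE powR_ge0.
rewrite /powR (negbTE (_ : (2 : R) != 0)) ?pnatr_eq0 //.
apply: le_trans (expR_ge1Dx _); rewrite mulrC mulrA mulrAC.
by rewrite lerDr ler01.
Qed.

(* Any [K] with [beta K >= 2] works: then [N^2 <= (N^beta)^K], and [2^x]
   dominates [x^K]. *)
Lemma mul_deltaN_le (R : realType) (beta : R) (K n : nat) : (0 < K)%N ->
  2 <= beta * K%:R ->
  (2 ^ n)%:R * deltaN beta n <= (K%:R / ln 2) ^+ K / (2 ^ n)%:R.
Proof.
move=> K_gt0 le2_betaK; set N : R := (2 ^ n)%:R; set M := N `^ beta.
have N_gt0 : 0 < N by rewrite ltr0n expn_gt0.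
have ln2_gt0 : 0 < ln (2 : R) by rewrite ln_gt0 // ltr1n.
have K_neq0 : (K%:R : R) != 0 by rewrite pnatr_eq0 -lt0n.
have N2_le : N ^+ 2 <= M ^+ K.
  rewrite -(powR_mulrn 2 (ltW N_gt0)) -(powR_mulrn K (powR_ge0 _ _)) /M -powRrM.
  by apply: ler_powR; rewrite // /N ler1n expn_gt0.
have M_le : M ^+ K <= (K%:R / ln 2) ^+ K * 2 `^ M.
  have -> : M ^+ K = (K%:R / ln 2) ^+ K * (ln 2 / K%:R * M) ^+ K.
    have ratio1 : K%:R / ln 2 * (ln 2 / K%:R) = 1 :> R.
      by rewrite mulrA divfK ?gt_eqF // mulfV.
    by rewrite -exprMn mulrA ratio1 mul1r.
  apply: ler_wpM2l; first by rewrite exprn_ge0 // divr_ge0 // ltW.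
  exact: pow_le_powR2 K_gt0 (powR_ge0 _ _).
rewrite /deltaN -/N -/M powRN ler_pdivlMr // mulrAC -expr2 ler_pdivrMr ?powR_gt0 //.
exact: le_trans N2_le M_le.
Qed.

Theorem proposition1 (R : realType) (Y Z S : finType)
  (W : 'F_2 -> Y -> R) (V : S -> 'F_2 -> Z -> R) (beta : R) :
  0 < beta -> beta < 2^-1 ->
  symmetric_bdmc W -> (forall st : S, symmetric_bdmc (V st)) ->
  forall T : nat,
    (forall (n : nat) (s : nat -> {ffun 'I_(2 ^ n) -> S})
            (f m : nat -> 'rV['F_2]_(2 ^ n)),
       error_prob W V beta T s f m
         <= (2 * T)%:R * ((2 ^ n)%:R * deltaN beta n))
    /\
    (forall (s : forall n : nat, nat -> {ffun 'I_(2 ^ n) -> S})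
            (f m : forall n : nat, nat -> 'rV['F_2]_(2 ^ n)),
       (fun n => error_prob W V beta T (s n) (f n) (m n)) @ \oo --> 0).
Proof.
move=> beta_gt0 _ symW _ T; split=> [n s f m|s f m]; first exact: error_prob_le.
pose K := (Num.truncn (2 / beta)).+1; pose C := (K%:R / ln (2 : R)) ^+ K.
have le2_betaK : 2 <= beta * K%:R.
  have -> : (2 : R) = 2 / beta * beta by rewrite divfK ?gt_eqF.
  by rewrite mulrC ler_pM2l // ltW // truncnS_gt.
apply: (@squeeze_cvgr _ _ _ _ (fun=> 0) (geometric ((2 * T)%:R * C) 2^-1)).
- apply: nearW => k; rewrite sumr_ge0 => [|w _]; last first.
    by case: symW => -[W_ge0 _] _; apply: outcome_prob_ge0.
  apply: le_trans (error_prob_le V beta T (s k) (f k) (m k) symW) _.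
  rewrite /geometric /= -mulrA; apply: ler_wpM2l => //.
  apply: le_trans (mul_deltaN_le k _ le2_betaK) _ => //.
  by rewrite natrX exprVn.
- exact: (@cvg_cst R^o _ nat \oo _).
- by apply: cvg_geometric; rewrite ger0_norm ?invr_ge0 // invf_lt1 // ltr1n.
Qed.
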